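(* The rule MaxHam satisfies antipodal strategyproofness and participation.
   Context: An agenda is a finite nonempty list $\Phi=(\phi_1,\dots,\phi_m)$ of propositional formulas; a judgment is $J\in\{0,1\}^m$; the antipodal judgment $\overline{J}$ accepts exactly the issues rejected by $J$. $\mathcal{J}(\Phi)\subseteq\{0,1\}^m$ is the nonempty set of admissible judgments. A profile for a finite set of agents $N$ is $\mathbf{P}=(J_1,\dots,J_n)\in\mathcal{J}(\Phi)^n$; $\mathbf{P}_{-i}$ removes agent $i$, $(\mathbf{P}_{-i},J)$ replaces $i$'s judgment by $J$. Hamming distance $H(J,J')=\sum_k|J(\phi_k)-J'(\phi_k)|$. $\mathrm{MaxHam}(\mathbf{P})=\arg\min_{J\in\mathcal{J}(\Phi)}\max_{i\in N}H(J_i,J)$. Agent $i$ with truthful $J_i$: $J\succeq_i J'$ iff $H(J_i,J)\le H(J_i,J')$. Set preferences $\mathrel{\mathring{\succeq}}_i$ (strict part $\mathrel{\mathring{\succ}}_i$) satisfy (R1) $J\succeq_i J'$ iff $\{J\}\mathrel{\mathring{\succeq}}_i\{J'\}$, and (R2) $X\mathrel{\mathring{\succ}}_i Y$ implies there exist $J\in X$, $J'\in Y$ with $J\succ_i J'$ and $\{J,J'\}\not\subseteq X\cap Y$. Participation: no $\mathbf{P}$, $i$ with $F(\mathbf{P}_{-i})\mathrel{\mathring{\succ}}_i F(\mathbf{P})$. Antipodal strategyproofness: no $\mathbf{P}$, $i$ with $F(\mathbf{P}_{-i},\overline{J_i})\mathrel{\mathring{\succ}}_i F(\mathbf{P})$.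 *)

From mathcomp Require Import all_boot.
Set Implicit Arguments. Unset Strict Implicit. Unset Printing Implicit Defensive.

(* A judgment on an agenda of m issues: J k = true iff issue k is accepted. *)
Definition judgment (m : nat) := {ffun 'I_m -> bool}.

Definition antipode m (J : judgment m) : judgment m := [ffun k => ~~ J k].

Definition ham m (J J' : judgment m) : nat := \sum_(k < m) (J k != J' k).

(* A profile for the finite agent set N (a subset of the finite type A) is
   given by P : A -> judgment m (only the values on N matter).  P_{-i} is
   (N :\ i, P); (P_{-i}, J) is (N, upd P i J). *)
Definition upd m (A : eqType) (P : A -> judgment m) (i : A) (J : judgment m)
  : A -> judgment m := fun j => if j == i then J else P j.

Definition is_profile m (A : finType) (Jadm : {set judgment m}) (N : {set A})
  (P : A -> judgment m) : Prop := forall i, i \in N -> P i \in Jadm.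

Definition maxdist m (A : finType) (N : {set A}) (P : A -> judgment m)
  (J : judgment m) : nat := \max_(i in N) ham (P i) J.

Definition MaxHam m (A : finType) (Jadm : {set judgment m}) (N : {set A})
  (P : A -> judgment m) : {set judgment m} :=
  [set J in Jadm | [forall J' in Jadm, maxdist N P J <= maxdist N P J']].

Definition strict_part T (R : T -> T -> Prop) (x y : T) : Prop := R x y /\ ~ R y x.

Definition R1 m (Ji : judgment m) (ext : {set judgment m} -> {set judgment m} -> Prop) :=
  forall J J' : judgment m, ham Ji J <= ham Ji J' <-> ext [set J] [set J'].

Definition R2 m (Ji : judgment m) (ext : {set judgment m} -> {set judgment m} -> Prop) :=
  forall X Y : {set judgment m}, strict_part ext X Y ->
    exists J, exists J', [/\ J \in X, J' \in Y, ham Ji J < ham Ji J' &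
      ~ (J \in X :&: Y /\ J' \in X :&: Y)].

Definition set_pref m (Ji : judgment m) (ext : {set judgment m} -> {set judgment m} -> Prop) :=
  R1 Ji ext /\ R2 Ji ext.

Definition participation m (A : finType) (Jadm : {set judgment m}) : Prop :=
  forall (N : {set A}) (P : A -> judgment m) (i : A),
    is_profile Jadm N P -> i \in N ->
    forall ext, set_pref (P i) ext ->
      ~ strict_part ext (MaxHam Jadm (N :\ i) P) (MaxHam Jadm N P).

(* Antipodal strategyproofness: the deviation profile (P_{-i}, antipode J_i)
   must itself be a profile, i.e. antipode J_i must be admissible. *)
Definition antipodal_sp m (A : finType) (Jadm : {set judgment m}) : Prop :=
  forall (N : {set A}) (P : A -> judgment m) (i : A),
    is_profile Jadm N P -> i \in N -> antipode (P i) \in Jadm ->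
    forall ext, set_pref (P i) ext ->
      ~ strict_part ext (MaxHam Jadm N (upd P i (antipode (P i)))) (MaxHam Jadm N P).

From mathcomp Require Import all_boot.
From mathcomp Require Import zify.

(* Fix the deviating agent i in N and write, for an
   admissible K, d(K) = H(J_i, K) and e(K) for the max-distance of K to the
   other agents.  The max-distance to the whole profile is max(d(K), e(K)),
   and after i reports the antipode of J_i it becomes max(m - d(K), e(K)).
   By (R2), a strict preference of i for the outcome X over Y yields J in X
   and J' in Y with d(J) < d(J') that do not both lie in X and Y.  In both
   cases, elementary inequalities on maxima show that J scores no worse than
   J' in the rule producing Y and J' no worse than J in the rule producing X;
   an exchange lemma for MaxHam then puts both J and J' in X and Y,
   contradicting (R2). *)

Lemma MaxHamP {m} {A : finType} {Jadm : {set judgment m}} {N : {set A}}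
    {P : A -> judgment m} {J : judgment m} :
  reflect (J \in Jadm /\ forall J', J' \in Jadm -> maxdist N P J <= maxdist N P J')
          (J \in MaxHam Jadm N P).
Proof.
rewrite /MaxHam inE; apply: (iffP andP) => [[JA /forall_inP HJ]|[JA HJ]] //.
by split=> //; apply/forall_inP.
Qed.

Lemma maxdist_split {m} {A : finType} {N : {set A}} {i : A} (iN : i \in N)
    (P : A -> judgment m) (J : judgment m) :
  maxdist N P J = maxn (ham (P i) J) (maxdist (N :\ i) P J).
Proof.
rewrite /maxdist (bigD1 i) //=; congr maxn.
by apply: eq_bigl => j; rewrite !inE andbC.
Qed.

Lemma maxdist_upd m (A : finType) (N : {set A}) (P : A -> judgment m) i K J :
  maxdist (N :\ i) (upd P i K) J = maxdist (N :\ i) P J.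
Proof.
rewrite /maxdist; apply: eq_bigr => j; rewrite !inE => /andP[ji _].
by rewrite /upd (negbTE ji).
Qed.

(* H(antipode J_i, J) = m - H(J_i, J): every issue counts in exactly one. *)
Lemma ham_antipode m (Ji J : judgment m) : ham (antipode Ji) J = m - ham Ji J.
Proof.
suff: ham Ji J + ham (antipode Ji) J = m by lia.
rewrite /ham -big_split /= (eq_bigr (fun _ => 1)) ?sum_nat_const ?card_ord ?muln1 //.
by move=> k _; rewrite ffunE; case: (Ji k); case: (J k).
Qed.

(* If J is closer to i than J' but not better overall, J' is not further
   from the others than J. *)
Lemma maxn_exchange (a b x y : nat) : a < b -> maxn b y <= maxn a x -> y <= x.
Proof. lia. Qed.

(* If J is closer to i than J', it is further from i's antipode; so if it is
   not worse against the antipode, it is not further from the others. *)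
Lemma maxn_antipode_exchange (m a b x y : nat) :
  a < b -> maxn (m - a) x <= maxn (m - b) y -> x <= y.
Proof. lia. Qed.

Lemma MaxHam_exchange m (A : finType) (Jadm : {set judgment m})
    (N1 N2 : {set A}) (P1 P2 : A -> judgment m) (J J' : judgment m) :
  J \in MaxHam Jadm N1 P1 -> J' \in MaxHam Jadm N2 P2 ->
  maxdist N1 P1 J' <= maxdist N1 P1 J -> maxdist N2 P2 J <= maxdist N2 P2 J' ->
  J \in MaxHam Jadm N1 P1 :&: MaxHam Jadm N2 P2 /\
  J' \in MaxHam Jadm N1 P1 :&: MaxHam Jadm N2 P2.
Proof.
move=> J1 J'2 le1 le2; rewrite !in_setI J1 J'2 !andbT.
move/MaxHamP: J1 => [JA opt1]; move/MaxHamP: J'2 => [J'A opt2].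
split; apply/MaxHamP; split=> // K KA.
- exact: leq_trans le2 (opt2 K KA).
- exact: leq_trans le1 (opt1 K KA).
Qed.

Lemma R2_no_strict_pref m (Ji : judgment m) ext (X Y : {set judgment m}) :
  R2 Ji ext ->
  (forall J J', J \in X -> J' \in Y -> ham Ji J < ham Ji J' ->
     J \in X :&: Y /\ J' \in X :&: Y) ->
  ~ strict_part ext X Y.
Proof.
move=> HR2 exch XY; have [J [J' [JX J'Y lt notboth]]] := HR2 X Y XY.
exact: notboth (exch J J' JX J'Y lt).
Qed.

Theorem corollary1 (m : nat) (A : finType) (Jadm : {set judgment m}) :
  0 < m -> Jadm != set0 ->
  antipodal_sp A Jadm /\ participation A Jadm.
Proof.
move=> _ _; split.
(* Antipodal strategyproofness: X is the outcome after i reports antipode J_i. *)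
- move=> N P i _ iN _ ext [_ HR2]; apply: R2_no_strict_pref HR2 _ => J J' JX J'Y lt.
  set P' := upd P i (antipode (P i)).
  have split' K : maxdist N P' K = maxn (m - ham (P i) K) (maxdist (N :\ i) P K).
    by rewrite (maxdist_split iN) maxdist_upd /P' /upd eqxx ham_antipode.
  have [[J'A optJ'] [JA optJ]] := (MaxHamP J'Y, MaxHamP JX).
  have le_others : maxdist (N :\ i) P J <= maxdist (N :\ i) P J'.
    by apply: (maxn_antipode_exchange m) lt _; rewrite -!split'; apply: optJ.
  have ge_others : maxdist (N :\ i) P J' <= maxdist (N :\ i) P J.
    by apply: maxn_exchange lt _; rewrite -!(maxdist_split iN); apply: optJ'.
  by apply: MaxHam_exchange JX J'Y _ _; rewrite ?split' ?(maxdist_split iN); lia.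
(* Participation: X is the outcome when i abstains. *)
- move=> N P i _ iN ext [_ HR2]; apply: R2_no_strict_pref HR2 _ => J J' JX J'Y lt.
  have [[J'A optJ'] [JA optJ]] := (MaxHamP J'Y, MaxHamP JX).
  have le_others := optJ _ J'A.
  have ge_others : maxdist (N :\ i) P J' <= maxdist (N :\ i) P J.
    by apply: maxn_exchange lt _; rewrite -!(maxdist_split iN); apply: optJ'.
  by apply: MaxHam_exchange JX J'Y ge_others _; rewrite !(maxdist_split iN); lia.
Qed.
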